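(* Let $q>1$ be a prime number and $k\ge1$. Then $\mathcal{Q}(\mathbf{ŁV}_{q+1}\times\mathbf{ŁV}_2)\subseteq\mathcal{Q}(\mathbf{ŁV}_{k+1})$ if and only if $q\mid k$.
   Context: $\mathbf{ŁV}_{n+1}$ is the MV-algebra (Łukasiewicz chain) on $\{0,\frac1n,\dots,\frac{n-1}n,1\}$ with $\neg x=1-x$, $x\oplus y=\min\{1,x+y\}$; $\mathbf{ŁV}_2$ is the two-element Boolean algebra. For a class (or single algebra) $K$, $\mathcal{Q}(K)$ denotes the quasivariety generated by $K$. *)

From mathcomp Require Import all_boot.
Set Implicit Arguments. Unset Strict Implicit. Unset Printing Implicit Defensive.

Inductive term : Type :=
| Var of nat
| Zero
| Neg of term
| Oplus of term & term.

Record alg : Type := Alg {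
  carrier :> Type;
  azero : carrier;
  aneg : carrier -> carrier;
  aoplus : carrier -> carrier -> carrier }.

Fixpoint eval (A : alg) (v : nat -> A) (t : term) : A :=
  match t with
  | Var n => v n
  | Zero => @azero A
  | Neg t => @aneg A (@eval A v t)
  | Oplus t u => @aoplus A (@eval A v t) (@eval A v u)
  end.

Record qident : Type := QI { prem : seq (term * term); concl : term * term }.

Fixpoint sat_all (A : alg) (v : nat -> A) (l : seq (term * term)) : Prop :=
  match l with
  | [::] => True
  | p :: l' => eval v p.1 = eval v p.2 /\ sat_all v l'
  end.

Definition holds (A : alg) (q : qident) : Prop :=
  forall v : nat -> A, sat_all v (prem q) -> eval v (concl q).1 = eval v (concl q).2.

Definition Qgen (K : alg -> Prop) (A : alg) : Prop :=
  forall q : qident, (forall B, K B -> holds B q) -> holds A q.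

Definition Qsubset (K1 K2 : alg -> Prop) : Prop :=
  forall A : alg, Qgen K1 A -> Qgen K2 A.

Definition single (B : alg) : alg -> Prop := fun A => A = B.

(* ŁV_{n+1}: element i : 'I_(n+1) represents i/n. *)
Definition LV (n : nat) : alg :=
  @Alg 'I_n.+1 ord0 (fun i => rev_ord i) (fun i j => inord (minn n (i + j))).

Definition prod_alg (A B : alg) : alg :=
  @Alg (A * B)%type (@azero A, @azero B)
       (fun x => (@aneg A x.1, @aneg B x.2))
       (fun x y => (@aoplus A x.1 y.1, @aoplus B x.2 y.2)).

From mathcomp Require Import all_boot.
From mathcomp Require Import zify.
Set Implicit Arguments. Unset Strict Implicit.

(* Quasi-identities pass to subalgebras and to direct products, and ŁV_{m+1}
   is a subalgebra of ŁV_{n+1} whenever m | n; so q | k gives the inclusion.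
   Conversely, the quasi-identity y ⊕ y = y & (q-1)x ⊕ y = ¬x ⊕ y ⇒ y = 1
   holds in ŁV_{k+1} unless q | k (the Boolean y must be 1, since y = 0
   would force x = 1/q, which is a multiple of 1/k only if q | k), but fails in ŁV_{q+1} × ŁV_2 at
   x = (1/q, 0), y = (0, 1). *)

Definition mv_morph (A B : alg) (f : A -> B) : Prop :=
  [/\ f (@azero A) = @azero B,
      forall x, f (@aneg A x) = @aneg B (f x)
    & forall x y, f (@aoplus A x y) = @aoplus B (f x) (f y)].

Lemma eval_morph (A B : alg) (f : A -> B) (v : nat -> A) t :
  mv_morph f -> eval (f \o v) t = f (eval v t).
Proof.
case=> f0 fN fD; elim: t => [n||t IH|t IHt u IHu] //=.
- by rewrite IH fN.
- by rewrite IHt IHu fD.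
Qed.

Lemma holds_inj_morph (A B : alg) (f : A -> B) qi :
  mv_morph f -> injective f -> holds B qi -> holds A qi.
Proof.
move=> fM f_inj hB v hv; apply: f_inj.
rewrite -!(eval_morph _ _ fM); apply: hB.
elim: (prem qi) hv => [|p l IH] //= [e hl]; split; last exact: IH.
by rewrite !(eval_morph _ _ fM) e.
Qed.

Lemma eval_prod (A B : alg) (v : nat -> prod_alg A B) t :
  eval v t = (eval (fst \o v) t, eval (snd \o v) t).
Proof.
elim: t => [n||t IH|t IHt u IHu] //=; first by case: (v n).
- by rewrite IH.
- by rewrite IHt IHu.
Qed.

Lemma holds_prod (A B : alg) qi :
  holds A qi -> holds B qi -> holds (prod_alg A B) qi.
Proof.
move=> hA hB v hv; rewrite !eval_prod; congr pair; [apply: hA|apply: hB];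
elim: (prem qi) hv => [|p l IH] //= [e hl]; (split; last exact: IH);
by move: e; rewrite !eval_prod => -[].
Qed.

Lemma Qgen_single_refl (A : alg) : Qgen (single A) A.
Proof. by move=> qi; apply. Qed.

Lemma Qsubset_singleP (A B : alg) :
  Qsubset (single A) (single B) <-> (forall qi, holds B qi -> holds A qi).
Proof.
split=> [hsub qi hB | hBA C hC qi hqi].
- by apply: (hsub _ (@Qgen_single_refl A) qi) => _ ->.
- by apply: hC => _ ->; apply/hBA/hqi.
Qed.

Section LVScale.

Variables m c : nat.

Definition LV_scale (i : LV m) : LV (m * c) := inord (i * c).

Lemma val_LV_scale i : val (LV_scale i) = i * c.
Proof. by rewrite /LV_scale /= inordK // ltnS leq_mul2r leq_ord orbT. Qed.

Lemma LV_scale_morph : mv_morph LV_scale.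
Proof.
split=> [|x|x y]; apply: val_inj; rewrite /= ?val_LV_scale /=.
- by rewrite mul0n.
- by rewrite !subSS mulnBl.
- by rewrite !inordK ?ltnS ?geq_minl // -mulnDl minnMl.
Qed.

Hypothesis c_gt0 : 0 < c.

Lemma LV_scale_inj : injective LV_scale.
Proof.
move=> x y /(congr1 val); rewrite !val_LV_scale => /eqP.
by rewrite eqn_mul2r eqn0Ngt c_gt0 => /eqP/val_inj.
Qed.

End LVScale.

Lemma holds_LV_dvd m n qi :
  m %| n -> 0 < n -> holds (LV n) qi -> holds (LV m) qi.
Proof.
case/dvdnP=> c ->; rewrite mulnC muln_gt0 => /andP[_ c_gt0].
exact: holds_inj_morph (LV_scale_morph m c) (LV_scale_inj c_gt0).
Qed.

Fixpoint nmul (n : nat) (t : term) : term :=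
  if n is n'.+1 then Oplus t (nmul n' t) else Zero.

Lemma val_eval_nmul k (v : nat -> LV k) n t :
  val (eval v (nmul n t) : LV k) = minn k (n * val (eval v t : LV k)).
Proof.
elim: n => [|n IH] /=; first by rewrite mul0n; lia.
rewrite inordK ?ltnS ?geq_minl // IH mulSn; set a := n * _; lia.
Qed.

Definition mult_qident (q : nat) : qident :=
  QI [:: (Oplus (Var 1) (Var 1), Var 1);
         (Oplus (nmul q.-1 (Var 0)) (Var 1), Oplus (Neg (Var 0)) (Var 1))]
     (Var 1, Neg Zero).

Lemma holds_mult_qident_LV q k :
  0 < q -> ~~ (q %| k) -> holds (LV k) (mult_qident q).
Proof.
move=> q_gt0 ndvd v [/(congr1 val) h1 [/(congr1 val) h2 _]]; apply: val_inj.
move: h1 h2; rewrite /= !inordK ?val_eval_nmul ?ltnS ?geq_minl //= subSS.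
have := ltn_ord (v 1); have := ltn_ord (v 0).
move: (nat_of_ord (v 0)) (nat_of_ord (v 1)) => x y; rewrite !ltnS => hx hy h1 h2.
have y_bool : y = 0 \/ y = k by lia.
case: y_bool => [y0 | ->]; last by rewrite subn1.
subst y.
have qx : q * x = x + q.-1 * x by rewrite -mulSn prednK.
have k_qx : k = q * x by lia.
by move: ndvd; rewrite k_qx dvdn_mulr.
Qed.

Lemma not_holds_mult_qident_prod q :
  0 < q -> ~ holds (prod_alg (LV q) (LV 1)) (mult_qident q).
Proof.
move=> q_gt0 hq.
pose v n : prod_alg (LV q) (LV 1) :=
  if n == 0 then (inord 1, ord0) else (ord0, ord_max).
have v_prem : sat_all v (prem (mult_qident q)).
  rewrite /= !eval_prod /v /=; split; last split => //.
  - by congr pair; apply: val_inj; rewrite /= inordK //= ?ltnS; lia.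
  - congr pair; apply: val_inj;
      rewrite /= !inordK ?val_eval_nmul ?ltnS ?geq_minl //= ?inordK //=; lia.
by move/(congr1 (fun p => val p.1)): (hq v v_prem); rewrite /v /=; lia.
Qed.

Theorem corollary5p4 (q k : nat) (hq : prime q) (hk : 1 <= k) :
  Qsubset (single (prod_alg (LV q) (LV 1))) (single (LV k)) <-> q %| k.
Proof.
have q_gt0 := prime_gt0 hq.
rewrite Qsubset_singleP; split=> [hsub | qk qi hk_qi].
- apply/negPn/negP => ndvd.
  exact/(not_holds_mult_qident_prod q_gt0)/hsub/holds_mult_qident_LV.
- by apply: holds_prod; apply: holds_LV_dvd hk hk_qi; rewrite ?dvd1n.
Qed.
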